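(* Let $G=(V,E)$ be a graph with nonnegative edge lengths $l_e$, root $r$, and integer demands $d_v>0$ on a set of demand nodes, with total demand $D=\sum_v d_v$. Fix $\epsilon>0$, let $K=\lceil \log_{1+\epsilon} D\rceil$, $M_i=(1+\epsilon)^i$ and $A_i(x)=\min\{x,M_i\}$ for $0\le i\le K$. Run the following procedure: (1) for each $i=0,\dots,K$ let $T_i$ be a routing tree returned by a (deterministic) $\lambda$-approximation algorithm for the single-sink rent-or-buy problem with cost function $A_i$; (2) for $i=1,\dots,K$ in increasing order, if $A_i(T_{i-1})<A_i(T_i)$ set $T_i\leftarrow T_{i-1}$; (3) for $i=K-1,\dots,0$ in decreasing order, if $A_i(T_{i+1})<A_i(T_i)$ set $T_i\leftarrow T_{i+1}$. Let $R_i$ and $B_i$ be the rent cost and normalized buy cost of the resulting tree $T_i$ (with respect to $M_i$). Then for every $i$ with $0\le i<K$ we have $B_i\ge B_{i+1}$ and $R_i\le R_{i+1}$.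
   Context: A routing tree is a tree in $G$ containing $r$ and all demand nodes; each demand node $v$ sends $d_v$ units of flow to $r$ along its unique tree path, and $x_e$ denotes the total flow on edge $e$. For a function $f$, the cost of a routing tree $T$ is $f(T)=\sum_{e\in T} l_e f(x_e)$. The single-sink rent-or-buy (SSRoB) problem with parameter $M$ is to find a routing tree minimizing $A(T)$ where $A(x)=\min\{x,M\}$; a $\lambda$-approximation algorithm returns a routing tree whose cost is at most $\lambda$ times the optimum. For a routing tree $T_i$ with flows $x_e$, its rent cost is $R_i=\sum_{e\in T_i,\,x_e<M_i} l_e A_i(x_e)$ and its normalized buy cost is $B_i=\sum_{e\in T_i,\,x_e\ge M_i} l_e$, so that $A_i(T_i)=R_i+M_iB_i$. *)

From HB Require Import structures.
From mathcomp Require Import all_boot all_order all_algebra.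
From mathcomp Require Export reals exp.
Set Implicit Arguments. Unset Strict Implicit. Unset Printing Implicit Defensive.
Import Order.TTheory GRing.Theory Num.Theory.
Local Open Scope ring_scope.

Section Defs.
Variables (R : realType) (V : finType).

(* A graph is given by V : finType and an edge set E : {set {set V}} whose
   elements are 2-element subsets of V.  A subset T of edges is a set of edges. *)

Definition tree_adj (T : {set {set V}}) : rel V := fun u v => [set u; v] \in T.

Definition tree_vertices (r : V) (T : {set {set V}}) : {set V} :=
  r |: \bigcup_(e in T) e.

Definition is_routing_tree (E : {set {set V}}) (r : V) (Dm : {set V})
    (T : {set {set V}}) : Prop :=
  [/\ T \subset E,
      (forall u v, u \in tree_vertices r T -> v \in tree_vertices r T ->
         connect (tree_adj T) u v),
      #|T| = #|tree_vertices r T|.-1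
    & Dm \subset tree_vertices r T].

(* flow x_e on tree edge e: total demand of the demand nodes whose (unique)
   tree path to r uses e, i.e. which are disconnected from r in T \ {e} *)
Definition flow (r : V) (Dm : {set V}) (d : V -> nat) (T : {set {set V}})
    (e : {set V}) : nat :=
  \sum_(v in Dm | ~~ connect (tree_adj (T :\ e)) v r) d v.

Definition Afun (M x : R) : R := Num.min x M.

Definition Acost (l : {set V} -> R) (r : V) (Dm : {set V}) (d : V -> nat)
    (M : R) (T : {set {set V}}) : R :=
  \sum_(e in T) l e * Afun M (flow r Dm d T e)%:R.

Definition rent_cost (l : {set V} -> R) (r : V) (Dm : {set V}) (d : V -> nat)
    (M : R) (T : {set {set V}}) : R :=
  \sum_(e in T | (flow r Dm d T e)%:R < M) l e * Afun M (flow r Dm d T e)%:R.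

Definition nbuy_cost (l : {set V} -> R) (r : V) (Dm : {set V}) (d : V -> nat)
    (M : R) (T : {set {set V}}) : R :=
  \sum_(e in T | M <= (flow r Dm d T e)%:R) l e.

(* The procedure.  C i T stands for A_i(T), T0 i for the tree of step (1). *)
Section Procedure.
Variables (C : nat -> {set {set V}} -> R) (T0 : nat -> {set {set V}}) (K : nat).

(* step (2): trees after the increasing pass, i = 0..K *)
Fixpoint fwd (i : nat) : {set {set V}} :=
  match i with
  | 0 => T0 0
  | j.+1 => if C j.+1 (fwd j) < C j.+1 (T0 j.+1) then fwd j else T0 j.+1
  end.

(* step (3): bwd_aux n is the final tree at index K - n *)
Fixpoint bwd_aux (n : nat) : {set {set V}} :=
  match n with
  | 0 => fwd K
  | m.+1 => if C (K - m.+1)%N (bwd_aux m) < C (K - m.+1)%N (fwd (K - m.+1))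
            then bwd_aux m else fwd (K - m.+1)
  end.

Definition final_tree (i : nat) : {set {set V}} := bwd_aux (K - i).

End Procedure.
End Defs.

From mathcomp Require Import all_boot all_order all_algebra.
From mathcomp Require Import reals exp.
From mathcomp Require Import zify lra.
Import Order.TTheory GRing.Theory Num.Theory.
Local Open Scope ring_scope.

(* As a function of M, the cost A_M(T) = R_M(T) + M B_M(T) of a fixed tree is
   concave and piecewise linear, with slope between B_{M'}(T) and B_M(T) on
   [M, M'].  After the two passes, T_i is no worse than T_{i+1} for A_i and
   T_{i+1} is no worse than T_i for A_{i+1}; comparing the increments of A
   between M_i and M_{i+1} for both trees gives
   (M_{i+1} - M_i) B_{i+1} <= (M_{i+1} - M_i) B_i, and the rent inequality
   follows by substituting this back into A_i(T_i) <= A_i(T_{i+1}). *)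

Section EdgeCost.
Variables (R : realType) (w x M M' : R).
Hypotheses (w_ge0 : 0 <= w) (leMM' : M <= M').

Lemma edge_cost_increment_ge :
  (M' - M) * (if M' <= x then w else 0) <= w * Afun M' x - w * Afun M x.
Proof.
rewrite /Afun; case: (lerP M' x) => hx.
  by rewrite !min_r ?(le_trans leMM' hx) // mulrBl mulrC [M * w]mulrC.
by rewrite mulr0 subr_ge0 ler_wpM2l // ge_min lexx.
Qed.

Lemma edge_cost_increment_le :
  w * Afun M' x - w * Afun M x <= (M' - M) * (if M <= x then w else 0).
Proof.
case: (lerP M x) => hx.
  have le_wM' : w * Afun M' x <= w * M' by rewrite ler_wpM2l // ge_min lexx orbT.
  rewrite /Afun (min_r hx) in le_wM' *; lra.
by rewrite /Afun mulr0 !min_l ?subrr // ltW // (lt_le_trans hx leMM').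
Qed.

End EdgeCost.

Lemma edge_cost_rent_buy (R : realType) (w x M : R) :
  w * Afun M x = (if x < M then w * Afun M x else 0) + M * (if M <= x then w else 0).
Proof.
case: (ltrP x M) => hx; first by rewrite mulr0 addr0.
by rewrite add0r /Afun (min_r hx) mulrC.
Qed.

Section TreeCost.
Context {R : realType} {V : finType}.
Context {l : {set V} -> R} {r : V} {Dm : {set V}} {d : V -> nat}.

Section FixedTree.
Variable T : {set {set V}}.
Hypothesis l_ge0 : {in T, forall e, 0 <= l e}.

Local Notation x e := (flow r Dm d T e)%:R.
Local Notation A M := (Acost l r Dm d M T).
Local Notation B M := (nbuy_cost l r Dm d M T).
Local Notation Rt M := (rent_cost l r Dm d M T).

Lemma nbuy_costE (M : R) : B M = \sum_(e in T) (if M <= x e then l e else 0).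
Proof. by rewrite /nbuy_cost big_mkcondr. Qed.

Lemma rent_costE (M : R) :
  Rt M = \sum_(e in T) (if x e < M then l e * Afun M (x e) else 0).
Proof. by rewrite /rent_cost big_mkcondr. Qed.

Lemma Acost_rent_buy (M : R) : A M = Rt M + M * B M.
Proof.
rewrite nbuy_costE rent_costE /Acost mulr_sumr -big_split.
by apply: eq_bigr => e _; apply: edge_cost_rent_buy.
Qed.

Lemma Acost_increment_ge {M M' : R} : M <= M' -> (M' - M) * B M' <= A M' - A M.
Proof.
move=> leMM'; rewrite nbuy_costE /Acost -sumrB mulr_sumr.
by apply: ler_sum => e eT; apply: edge_cost_increment_ge => //; apply: l_ge0.
Qed.

Lemma Acost_increment_le {M M' : R} : M <= M' -> A M' - A M <= (M' - M) * B M.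
Proof.
move=> leMM'; rewrite nbuy_costE /Acost -sumrB mulr_sumr.
by apply: ler_sum => e eT; apply: edge_cost_increment_le => //; apply: l_ge0.
Qed.

Lemma Acost_le_rent_buy {M M' : R} : M <= M' -> A M <= Rt M' + M * B M'.
Proof.
move=> leMM'; have := Acost_increment_ge leMM'.
rewrite (Acost_rent_buy M'); lra.
Qed.

End FixedTree.

Arguments Acost_increment_ge {T} l_ge0 {M M'}.
Arguments Acost_increment_le {T} l_ge0 {M M'}.
Arguments Acost_le_rent_buy {T} l_ge0 {M M'}.

Lemma exchange_rent_buy_monotone {M M' : R} {T T' : {set {set V}}} :
  {in T, forall e, 0 <= l e} -> {in T', forall e, 0 <= l e} ->
  0 <= M -> M < M' ->
  Acost l r Dm d M T <= Acost l r Dm d M T' ->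
  Acost l r Dm d M' T' <= Acost l r Dm d M' T ->
  nbuy_cost l r Dm d M' T' <= nbuy_cost l r Dm d M T /\
  rent_cost l r Dm d M T <= rent_cost l r Dm d M' T'.
Proof.
move=> lT lT' M_ge0 ltMM' optM optM'.
have leMM' := ltW ltMM'.
have dM_gt0 : 0 < M' - M by rewrite subr_gt0.
have incT' := Acost_increment_ge lT' leMM'.
have incT := Acost_increment_le lT leMM'.
have buy_le : nbuy_cost l r Dm d M' T' <= nbuy_cost l r Dm d M T.
  by rewrite -(ler_pM2l dM_gt0); lra.
split=> //.
have := Acost_le_rent_buy lT' leMM'; have := Acost_rent_buy T M.
have := ler_wpM2l M_ge0 buy_le; lra.
Qed.

End TreeCost.

Section Procedure.
Context {R : realType} {V : finType}.
Variables (C : nat -> {set {set V}} -> R) (T0 : nat -> {set {set V}}) (K : nat).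

Local Notation fwd := (fwd C T0).
Local Notation Tf := (final_tree C T0 K).

Lemma final_treeK : Tf K = fwd K.
Proof. by rewrite /final_tree subnn. Qed.

Lemma final_treeS i : (i < K)%N ->
  Tf i = if C i (Tf i.+1) < C i (fwd i) then Tf i.+1 else fwd i.
Proof.
move=> ltiK; rewrite /final_tree.
have -> : (K - i = (K - i.+1).+1)%N by lia.
by rewrite /= (_ : (K - (K - i.+1).+1 = i)%N) //; lia.
Qed.

Lemma fwd_le_prev j : C j.+1 (fwd j.+1) <= C j.+1 (fwd j).
Proof. by rewrite /=; case: ltP => // /ltW. Qed.

Lemma final_tree_le_fwd j : (j <= K)%N -> C j (Tf j) <= C j (fwd j).
Proof.
rewrite leq_eqVlt => /predU1P[-> | ltjK]; first by rewrite final_treeK.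
by rewrite final_treeS //; case: ltP => // /ltW.
Qed.

Lemma final_tree_exchange i : (i < K)%N ->
  C i (Tf i) <= C i (Tf i.+1) /\ C i.+1 (Tf i.+1) <= C i.+1 (Tf i).
Proof.
move=> ltiK; rewrite [Tf i]final_treeS //.
case: ltP => [/ltW | fwd_le]; first by split.
by split=> //; apply: le_trans (@final_tree_le_fwd i.+1 ltiK) (fwd_le_prev i).
Qed.

Lemma fwd_in_range j : exists2 k, (k <= j)%N & fwd j = T0 k.
Proof.
elim: j => [|j [k lekj fwd_j]]; first by exists 0%N.
by rewrite /= fwd_j; case: ifP => _; [exists k => //; lia | exists j.+1].
Qed.

Lemma final_tree_in_range i : exists2 k, (k <= K)%N & Tf i = T0 k.
Proof.
rewrite /final_tree; elim: (K - i)%N => [|m [k lekK bwd_m]] /=.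
  by have [k lekK ->] := fwd_in_range K; exists k.
rewrite bwd_m; case: ifP => _; first by exists k.
by have [k' lek' ->] := fwd_in_range (K - m.+1); exists k' => //; lia.
Qed.

End Procedure.

Theorem lemma4 (R : realType) (V : finType) (E : {set {set V}})
  (l : {set V} -> R) (r : V) (Dm : {set V}) (d : V -> nat)
  (eps lambda : R) (K : nat) (alg : R -> {set {set V}}) :
  (forall e, e \in E -> #|e| = 2%N) ->
  (forall e, e \in E -> 0 <= l e) ->
  (forall v, v \in Dm -> (0 < d v)%N) ->
  0 < eps ->
  (K%:Z = Num.ceil (ln ((\sum_(v in Dm) d v)%N%:R : R) / ln (1 + eps))) ->
  (* alg is a deterministic lambda-approximation algorithm for SSRoB with
     parameter M_i = (1+eps)^i, for each 0 <= i <= K *)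
  (forall i, (i <= K)%N ->
     is_routing_tree E r Dm (alg ((1 + eps) ^+ i)) /\
     (forall T, is_routing_tree E r Dm T ->
        Acost l r Dm d ((1 + eps) ^+ i) (alg ((1 + eps) ^+ i))
          <= lambda * Acost l r Dm d ((1 + eps) ^+ i) T)) ->
  let M := fun i : nat => (1 + eps) ^+ i in
  let C := fun (i : nat) (T : {set {set V}}) => Acost l r Dm d (M i) T in
  let Tf := final_tree C (fun i => alg (M i)) K in
  forall i, (i < K)%N ->
    nbuy_cost l r Dm d (M i.+1) (Tf i.+1) <= nbuy_cost l r Dm d (M i) (Tf i) /\
    rent_cost l r Dm d (M i) (Tf i) <= rent_cost l r Dm d (M i.+1) (Tf i.+1).
Proof.
move=> _ l_ge0 _ eps_gt0 _ alg_ok M C Tf i ltiK.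
have l_ge0_Tf j : {in Tf j, forall e, 0 <= l e}.
  rewrite /Tf; have [k lekK ->] := final_tree_in_range C (fun i => alg (M i)) K j.
  have [[sTE _ _ _] _] := alg_ok k lekK.
  by move=> e /(subsetP sTE); apply: l_ge0.
have M_gt0 : 0 < M i by apply: exprn_gt0; lra.
have ltM : M i < M i.+1 by rewrite /M exprS ltr_pMl // ltrDl.
have [optMi optMi1] := final_tree_exchange C (fun i => alg (M i)) _ _ ltiK.
exact: exchange_rent_buy_monotone (ltW M_gt0) ltM optMi optMi1.
Qed.
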